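(* Let $\mathcal C$ be a prenex class of sentences. Then: (i) 1-satisfiability of sentences in $\mathcal C$ is decidable in $G_V$ for every Gödel set $V$ if and only if classical satisfiability of sentences in $\mathcal C$ is decidable; (ii) for any two Gödel sets $V,V'$, a sentence in $\mathcal C$ is 1-satisfiable in $G_V$ if and only if it is 1-satisfiable in $G_{V'}$.
   Context: A Gödel set is a closed set $V\subseteq[0,1]$ with $0,1\in V$. A $V$-interpretation assigns to each $k$-ary predicate a function $U^k\to V$ on a nonempty domain $U$ (constants and function symbols as usual); $\bot\mapsto 0$, $\wedge,\vee$ are $\min,\max$, $\mathcal I(A\supset B)=1$ if $\mathcal I(A)\le\mathcal I(B)$ and $=\mathcal I(B)$ otherwise, $\forall,\exists$ are $\inf,\sup$ over $U$. A sentence is 1-satisfiable in $G_V$ if some $V$-interpretation gives it value $1$; classical satisfiability is two-valued satisfiability. A prenex sentence has the form $Q_1x_1\dots Q_nx_nB$ with $Q_i\in\{\forall,\exists\}$ and $B$ quantifier-free; a prenex class is the set of prenex sentences whose quantifier prefix belongs to a fixed set of prefixes (possibly with a fixed restriction on the signature, e.g. function-free). *)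

From HB Require Import structures.
From mathcomp Require Import all_boot all_order all_algebra.
From mathcomp Require Import all_classical all_reals all_analysis.
From mathcomp Require Import Rstruct Rstruct_topology.

Set Implicit Arguments.
Unset Strict Implicit.
Unset Printing Implicit Defensive.

Import Order.TTheory GRing.Theory Num.Theory.
From Stdlib Require Rdefinitions.
Notation R := Rdefinitions.R.

(* Function / predicate symbols are indexed by nat; a symbol is the   *)
(* pair (name, arity), the arity being the number of arguments.       *)

Inductive term : Type :=
| TVar : nat -> term
| TFun : nat -> seq term -> term.

Inductive formula : Type :=
| FBot : formula
| FAtom : nat -> seq term -> formula
| FAnd : formula -> formula -> formula
| FOr : formula -> formula -> formula
| FImp : formula -> formula -> formula
| FAll : nat -> formula -> formula
| FEx : nat -> formula -> formula.

Fixpoint fv_term (t : term) : seq nat :=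
  match t with
  | TVar x => [:: x]
  | TFun _ ts => flatten (map fv_term ts)
  end.

Fixpoint fv (A : formula) : seq nat :=
  match A with
  | FBot => [::]
  | FAtom _ ts => flatten (map fv_term ts)
  | FAnd A B | FOr A B | FImp A B => fv A ++ fv B
  | FAll x A | FEx x A => seq.filter (predC1 x) (fv A)
  end.

Definition sentence (A : formula) : Prop := fv A = [::].

Fixpoint qfree (A : formula) : bool :=
  match A with
  | FBot | FAtom _ _ => true
  | FAnd A B | FOr A B | FImp A B => qfree A && qfree B
  | FAll _ _ | FEx _ _ => false
  end.

Inductive quant : Type := QAll | QEx.

Definition prenex_of (qs : seq quant) (xs : seq nat) (B : formula) : formula :=
  foldr (fun qx C => match qx.1 with
                     | QAll => FAll qx.2 C
                     | QEx => FEx qx.2 C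
                     end) B (zip qs xs).

Fixpoint fun_syms_term (t : term) : seq (nat * nat) :=
  match t with
  | TVar _ => [::]
  | TFun f ts => (f, size ts) :: flatten (map fun_syms_term ts)
  end.

Fixpoint fun_syms (A : formula) : seq (nat * nat) :=
  match A with
  | FBot => [::]
  | FAtom _ ts => flatten (map fun_syms_term ts)
  | FAnd A B | FOr A B | FImp A B => fun_syms A ++ fun_syms B
  | FAll _ A | FEx _ A => fun_syms A
  end.

Fixpoint pred_syms (A : formula) : seq (nat * nat) :=
  match A with
  | FBot => [::]
  | FAtom p ts => [:: (p, size ts)]
  | FAnd A B | FOr A B | FImp A B => pred_syms A ++ pred_syms B
  | FAll _ A | FEx _ A => pred_syms A
  end.

(* A prenex class: the prenex sentences whose quantifier prefix belongs
   to a fixed set [Pref] of prefixes and whose signature (the sets of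
   predicate symbols and of function symbols occurring in it) satisfies
   a fixed restriction [SigOK] (e.g. "no function symbols of arity > 0"
   for function-free classes; take [SigOK] always true for none). *)
Definition prenex_class (Pref : seq quant -> Prop)
    (SigOK : (nat * nat -> Prop) -> (nat * nat -> Prop) -> Prop)
    (A : formula) : Prop :=
  sentence A /\
  (exists (qs : seq quant) (xs : seq nat) (B : formula),
      qfree B /\ size qs = size xs /\ A = prenex_of qs xs B /\ Pref qs) /\
  SigOK (fun s => s \in pred_syms A) (fun s => s \in fun_syms A).

Local Open Scope ring_scope.
Local Open Scope classical_set_scope.

Definition godel_set (V : set R) : Prop :=
  closed V /\ (forall x, V x -> 0 <= x <= 1) /\ V 0 /\ V 1.

Definition upd (U : Type) (rho : nat -> U) (x : nat) (u : U) : nat -> U :=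
  fun y => if y == x then u else rho y.

Fixpoint teval (U : Type) (f : nat -> seq U -> U) (rho : nat -> U) (t : term)
  : U :=
  match t with
  | TVar x => rho x
  | TFun g ts => f g (map (teval f rho) ts)
  end.

(* an interpretation on the (nonempty, witnessed by g_elt) domain U *)
Record ginterp (U : Type) := GInterp {
  g_elt : U;
  g_fun : nat -> seq U -> U;
  g_pred : nat -> seq U -> R }.

Fixpoint geval (U : Type) (I : ginterp U) (rho : nat -> U) (A : formula) : R :=
  match A with
  | FBot => 0
  | FAtom p ts => g_pred I p (map (teval (g_fun I) rho) ts)
  | FAnd A B => Num.min (geval I rho A) (geval I rho B)
  | FOr A B => Num.max (geval I rho A) (geval I rho B)
  | FImp A B => if geval I rho A <= geval I rho B then 1 else geval I rho B
  | FAll x A => inf (range (fun u => geval I (upd rho x u) A))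
  | FEx x A => sup (range (fun u => geval I (upd rho x u) A))
  end.

Definition V_interp (V : set R) (U : Type) (I : ginterp U) : Prop :=
  forall p l, V (g_pred I p l).

Definition one_sat (V : set R) (A : formula) : Prop :=
  exists (U : Type) (I : ginterp U),
    V_interp V I /\ geval I (fun _ => g_elt I) A = 1.

Record cinterp (U : Type) := CInterp {
  c_elt : U;
  c_fun : nat -> seq U -> U;
  c_pred : nat -> seq U -> Prop }.

Fixpoint ceval (U : Type) (I : cinterp U) (rho : nat -> U) (A : formula) : Prop :=
  match A with
  | FBot => False
  | FAtom p ts => c_pred I p (map (teval (c_fun I) rho) ts)
  | FAnd A B => ceval I rho A /\ ceval I rho B
  | FOr A B => ceval I rho A \/ ceval I rho B
  | FImp A B => ceval I rho A -> ceval I rho B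
  | FAll x A => forall u, ceval I (upd rho x u) A
  | FEx x A => exists u, ceval I (upd rho x u) A
  end.

Definition csat (A : formula) : Prop :=
  exists (U : Type) (I : cinterp U), ceval I (fun _ => c_elt I) A.

Inductive rfun : Type :=
| RZero : rfun
| RSucc : rfun
| RProj : nat -> rfun
| RComp : rfun -> seq rfun -> rfun
| RPrec : rfun -> rfun -> rfun
| RMin : rfun -> rfun.

(* big-step semantics: reval f v y  means  f(v) converges to y *)
Inductive reval : rfun -> seq nat -> nat -> Prop :=
| ev_zero v : reval RZero v 0
| ev_succ x v : reval RSucc (x :: v) x.+1
| ev_proj i v : (i < size v)%N -> reval (RProj i) v (nth 0%N v i)
| ev_comp f gs v ws y :
    reval_list gs v ws -> reval f ws y -> reval (RComp f gs) v y
| ev_prec0 f g v y : reval f v y -> reval (RPrec f g) (0%N :: v) y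
| ev_precS f g n v z y :
    reval (RPrec f g) (n :: v) z -> reval g (n :: z :: v) y ->
    reval (RPrec f g) (n.+1 :: v) y
| ev_min f v n :
    reval f (n :: v) 0%N ->
    (forall m, (m < n)%N -> exists k, reval f (m :: v) k.+1) ->
    reval (RMin f) v n
with reval_list : seq rfun -> seq nat -> seq nat -> Prop :=
| evl_nil v : reval_list [::] v [::]
| evl_cons g gs v w ws :
    reval g v w -> reval_list gs v ws -> reval_list (g :: gs) v (w :: ws).

(* Goedel numbering of formulas (Cantor pairing) *)
Definition npair (x y : nat) : nat := ((x + y) * (x + y).+1 %/ 2 + y)%N.

Definition code_seq (s : seq nat) : nat :=
  foldr (fun a r => (npair a r).+1) 0%N s.

Fixpoint code_term (t : term) : nat :=
  match t with
  | TVar x => npair 0 x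
  | TFun f ts => npair 1 (npair f (code_seq (map code_term ts)))
  end.

Fixpoint code (A : formula) : nat :=
  match A with
  | FBot => npair 0 0
  | FAtom p ts => npair 1 (npair p (code_seq (map code_term ts)))
  | FAnd A B => npair 2 (npair (code A) (code B))
  | FOr A B => npair 3 (npair (code A) (code B))
  | FImp A B => npair 4 (npair (code A) (code B))
  | FAll x A => npair 5 (npair x (code A))
  | FEx x A => npair 6 (npair x (code A))
  end.

Definition decidable_on (C : formula -> Prop) (P : formula -> Prop) : Prop :=
  exists p : rfun, forall A, C A ->
    (P A -> reval p [:: code A] 1%N) /\ (~ P A -> reval p [:: code A] 0%N).

(* A Goedel interpretation giving a prenex sentence a positive value yields a
   classical model of it: read an atom as true iff its value is positive.
   Positivity commutes with min, max and Goedel implication (for values in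
   [0, 1]), so it transfers through the quantifier-free matrix; a positive
   infimum makes every instance positive and a positive supremum makes some
   instance positive, so it transfers through the prefix as well.  Conversely
   a classical model is a {0, 1}-valued Goedel interpretation, which is a
   V-interpretation for every Goedel set V.  Hence, on prenex sentences,
   1-satisfiability in G_V coincides with classical satisfiability for
   every V, and both claims follow. *)
From mathcomp Require Import all_boot all_order all_algebra.
From mathcomp Require Import all_classical all_reals all_analysis.
From mathcomp Require Import Rstruct Rstruct_topology.

Set Implicit Arguments.
Unset Strict Implicit.
Unset Printing Implicit Defensive.

Import Order.TTheory GRing.Theory Num.Theory.
Local Open Scope ring_scope.
Local Open Scope classical_set_scope.

Section RangeBounds.
Variables (U : Type) (f : U -> R).

Lemma inf_range_min u : (forall v, f u <= f v) -> inf (range f) = f u.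
Proof.
move=> fu_min; apply/le_anti/andP; split.
- by apply: ge_inf; [exists (f u) => _ [v _ <-] | exists u].
- by apply: lb_le_inf; [exists (f u), u | move=> _ [v _ <-]].
Qed.

Lemma sup_range_max u : (forall v, f v <= f u) -> sup (range f) = f u.
Proof.
move=> fu_max; apply/le_anti/andP; split.
- by apply: ge_sup; [exists (f u), u | move=> _ [v _ <-]].
- by apply: ub_le_sup; [exists (f u) => _ [v _ <-] | exists u].
Qed.

Hypothesis f01 : forall u, 0 <= f u <= 1.

Lemma inf_range_le u : inf (range f) <= f u.
Proof.
by apply: ge_inf; [exists 0 => _ [v _ <-]; case/andP: (f01 v) | exists u].
Qed.

Lemma inf_range_01 (u : U) : 0 <= inf (range f) <= 1.
Proof.
apply/andP; split.
- by apply: lb_le_inf; [exists (f u), u | move=> _ [v _ <-]; case/andP: (f01 v)].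
- by apply: le_trans (inf_range_le u) _; case/andP: (f01 u).
Qed.

Lemma sup_range_01 (u : U) : 0 <= sup (range f) <= 1.
Proof.
have ub1 : ubound (range f) 1 by move=> _ [v _ <-]; case/andP: (f01 v).
apply/andP; split; last by apply: ge_sup; [exists (f u), u |].
apply: le_trans (ub_le_sup (ex_intro _ 1 ub1) (ex_intro2 _ _ u I erefl)).
by case/andP: (f01 u).
Qed.

End RangeBounds.

Section PositivePart.
Variables (U : Type) (I : ginterp U).
Hypothesis pred01 : forall p l, 0 <= g_pred I p l <= 1.

Lemma geval_01 A rho : 0 <= geval I rho A <= 1.
Proof.
elim: A rho => [|p ts|A IA B IB|A IA B IB|A IA B IB|x A IA|x A IA] rho /=.
- by rewrite lexx ler01.
- exact: pred01.
- case/andP: (IA rho) => a0 a1; case/andP: (IB rho) => b0 b1.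
  by rewrite ge_min a1 le_min a0 b0.
- case/andP: (IA rho) => a0 a1; case/andP: (IB rho) => b0 b1.
  by rewrite le_max a0 ge_max a1 b1.
- by case: ifP => _; rewrite ?lexx ?ler01.
- exact: inf_range_01 (fun u => IA (upd rho x u)) (g_elt I).
- exact: sup_range_01 (fun u => IA (upd rho x u)) (g_elt I).
Qed.

Definition positive_cinterp : cinterp U :=
  CInterp (g_elt I) (g_fun I) (fun p l => 0 < g_pred I p l).

Lemma geval_gt0_qfree B rho :
  qfree B -> 0 < geval I rho B <-> ceval positive_cinterp rho B.
Proof.
elim: B rho => [|p ts|A IA B IB|A IA B IB|A IA B IB|//|//] rho //=.
- by rewrite ltxx.
- case/andP=> qA qB; rewrite lt_min -(IA rho qA) -(IB rho qB).
  by split => [/andP[]|[-> ->]].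
- case/andP=> qA qB; rewrite lt_max -(IA rho qA) -(IB rho qB).
  by split => [/orP[]|[] ->]; rewrite ?orbT; auto.
- case/andP=> qA qB; rewrite -(IA rho qA) -(IB rho qB).
  case: ifP => [AleB|/negbT]; first by split => // _ /lt_le_trans; apply.
  rewrite -ltNge => BltA; split => [// | AB]; apply: AB.
  by case/andP: (geval_01 B rho) => B0 _; apply: le_lt_trans B0 BltA.
Qed.

Lemma ceval_prenex_gt0 qs xs B rho : qfree B ->
  0 < geval I rho (prenex_of qs xs B) ->
  ceval positive_cinterp rho (prenex_of qs xs B).
Proof.
move=> qB; elim: qs xs rho => [|q qs IH] [|x xs] rho;
  rewrite /prenex_of /=; try exact: (geval_gt0_qfree _ qB).1.
case: q => /= pos.
- move=> u; apply: IH; apply: lt_le_trans pos _.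
  exact: inf_range_le (fun v => geval_01 _ (upd rho x v)) u.
- have [|_ [u _ <-] posu] := sup_gt _ pos; first by eexists; exists (g_elt I).
  by exists u; apply: IH.
Qed.

End PositivePart.

Section CrispInterpretation.
Variables (U : Type) (J : cinterp U).

Definition crisp_ginterp : ginterp U :=
  GInterp (c_elt J) (c_fun J) (fun p l => `[< c_pred J p l >]%:R).

Lemma geval_crisp A rho : geval crisp_ginterp rho A = `[< ceval J rho A >]%:R.
Proof.
elim: A rho => [|p ts|A IA B IB|A IA B IB|A IA B IB|x A IA|x A IA] rho /=.
- by rewrite asboolF.
- by [].
- rewrite IA IB asbool_and.
  by case: `[< _ >]; case: `[< _ >]; rewrite /= ?minxx ?(min_idPl ler01) ?(min_idPr ler01).
- rewrite IA IB asbool_or.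
  by case: `[< _ >]; case: `[< _ >]; rewrite /= ?maxxx ?(max_idPl ler01) ?(max_idPr ler01).
- rewrite IA IB asbool_imply.
  by case: `[< _ >]; case: `[< _ >]; rewrite /= ?lexx ?ler01 ?ler10.
- under eq_fun do rewrite IA.
  have [all_true|/existsNP[u false_u]] := asboolP (forall u, ceval J (upd rho x u) A).
  + by rewrite (inf_range_min (u := c_elt J)) => [|v]; rewrite !(asboolT (all_true _)).
  + by rewrite (inf_range_min (u := u)) => [|v]; rewrite (asboolF false_u) ?ler0n.
- under eq_fun do rewrite IA.
  have [[u true_u]|/forallNP none_true] := asboolP (exists u, ceval J (upd rho x u) A).
  + by rewrite (sup_range_max (u := u)) => [|v]; rewrite (asboolT true_u) ?lern1 ?leq_b1.
  + by rewrite (sup_range_max (u := c_elt J)) => [|v]; rewrite !(asboolF (none_true _)).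
Qed.

End CrispInterpretation.

Lemma csat_one_sat V A : V 0 -> V 1 -> csat A -> one_sat V A.
Proof.
move=> V0 V1 [U [J JA]]; exists U, (crisp_ginterp J); split.
- by move=> p l /=; case: `[< _ >].
- by rewrite geval_crisp asboolT.
Qed.

Lemma one_sat_prenex_csat V qs xs B :
  (forall v, V v -> 0 <= v <= 1) -> qfree B ->
  one_sat V (prenex_of qs xs B) -> csat (prenex_of qs xs B).
Proof.
move=> V01 qB [U [I [VI IA]]]; exists U, (positive_cinterp I).
by apply: ceval_prenex_gt0 (fun p l => V01 _ (VI p l)) _ _ _ _ qB _; rewrite IA ltr01.
Qed.

Lemma prenex_class_one_satE Pref SigOK V A :
  godel_set V -> prenex_class Pref SigOK A -> one_sat V A <-> csat A.
Proof.
move=> [_ [V01 [V0 V1]]] [_ [[qs [xs [B [qB [_ [-> _]]]]]] _]].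
by split; [exact: one_sat_prenex_csat | exact: csat_one_sat].
Qed.

Lemma decidable_on_iff (C P Q : formula -> Prop) :
  (forall A, C A -> P A <-> Q A) -> decidable_on C P -> decidable_on C Q.
Proof.
move=> PQ [p decP]; exists p => A CA; rewrite -(PQ A CA); exact: decP.
Qed.

Lemma godel_set_itv01 : godel_set `[0, 1].
Proof.
split; first exact: interval_closed.
split; first by move=> x /=; rewrite in_itv.
by split; rewrite /= in_itv /= lexx ler01.
Qed.

Theorem mainTheorem5 (Pref : seq quant -> Prop)
    (SigOK : (nat * nat -> Prop) -> (nat * nat -> Prop) -> Prop) :
  ((forall V : set R, godel_set V ->
      decidable_on (prenex_class Pref SigOK) (one_sat V))
    <-> decidable_on (prenex_class Pref SigOK) csat) /\
  (forall V V' : set R, godel_set V -> godel_set V' ->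
     forall A, prenex_class Pref SigOK A -> (one_sat V A <-> one_sat V' A)).
Proof.
have one_satE V A := @prenex_class_one_satE Pref SigOK V A.
split; first split.
- move=> dec_one_sat; apply: decidable_on_iff (dec_one_sat _ godel_set_itv01).
  by move=> A; apply: one_satE godel_set_itv01.
- move=> dec_csat V gV; apply: decidable_on_iff dec_csat => A CA.
  by rewrite (one_satE V A gV CA).
- by move=> V V' gV gV' A CA; rewrite (one_satE V A gV CA) (one_satE V' A gV' CA).
Qed.
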